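(* Under the standing assumptions below, for every $t>0$ one has $\mathbb P\big(\{\zeta_t=1\}\,\Delta\,\{\tau\le t\}\big)=0$. Consequently $\tau$ is a stopping time with respect to $\mathbb F^{\zeta,c}$, and hence also with respect to $\mathbb F^{\zeta,c}_+$.
   Context: $(\Omega,\mathcal F,\mathbb P)$ is a complete probability space with null sets $\mathcal N_P$. $\gamma=(\gamma_t,t\ge0)$ is a standard gamma process (driftless subordinator, $\gamma_0=0$, càdlàg, $\mathbb E[e^{-\lambda\gamma_t}]=(1+\lambda)^{-t}$). $\tau:\Omega\to(0,+\infty)$ is a strictly positive random variable, independent of $\gamma$, with distribution function $F(t)=\mathbb P(\tau\le t)$ and law $\mathbb P_\tau$. The gamma bridge with random length $\tau$ is $\zeta_t:=\gamma_{t\wedge\tau}/\gamma_\tau$, $t\ge0$. $\Delta$ is symmetric difference. For a process $Y$: $\mathcal F^Y_t=\sigma(Y_s,s\le t)$, $\mathcal F^{Y,c}_t=\mathcal F^Y_t\vee\mathcal N_P$, and $\mathbb F^{Y,c}_+=(\bigcap_{s>t}\mathcal F^{Y,c}_s)_{t\ge0}$. *)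

From HB Require Import structures.
From mathcomp Require Import all_boot all_order all_algebra.
From mathcomp Require Import all_classical all_reals all_analysis.
Set Implicit Arguments. Unset Strict Implicit. Unset Printing Implicit Defensive.
Import Order.TTheory GRing.Theory Num.Theory.
Import numFieldNormedType.Exports.
Local Open Scope classical_set_scope.
Local Open Scope ring_scope.

Section defs.
Context {d : measure_display} {Omega : measurableType d} {R : realType}.
Variable P : probability Omega R.

Definition complete_prob : Prop :=
  forall N : set Omega, P.-negligible N -> measurable N.

Definition null_sets : set (set Omega) := [set N | P.-negligible N].

Definition mutually_independent (n : nat) (X : nat -> Omega -> R) : Prop :=
  forall B : nat -> set R, (forall i, measurable (B i)) ->
    P (\bigcap_(i in `I_n) (X i @^-1` B i)) =
    \big[*%E/1%E]_(i < n) P (X i @^-1` B i).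

(* Independence of the random variable T from the whole process Y = (Y_t)_{t>=0}
   (checked on the pi-system of finite-dimensional cylinder events). *)
Definition independent_rv_process (T : Omega -> R) (Y : R -> Omega -> R) : Prop :=
  forall (n : nat) (t : nat -> R) (B : set R) (C : nat -> set R),
    measurable B -> (forall i, measurable (C i)) -> (forall i, 0 <= t i) ->
    P (T @^-1` B `&` \bigcap_(i in `I_n) (Y (t i) @^-1` C i)) =
    (P (T @^-1` B) * P (\bigcap_(i in `I_n) (Y (t i) @^-1` C i)))%E.

(* Standard gamma process: a subordinator (gamma_0 = 0, cadlag nondecreasing
   paths, independent increments) whose increments have Laplace transform
   E[exp(-lam (gamma_t - gamma_s))] = (1+lam)^{-(t-s)}; stationarity of the
   increments and driftlessness follow from this Laplace transform. *)
Definition standard_gamma_process (g : R -> Omega -> R) : Prop :=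
  (forall t, 0 <= t -> measurable_fun setT (g t)) /\
      (forall w, g 0 w = 0) /\
      (forall w s t, 0 <= s -> s <= t -> g s w <= g t w) /\
      (forall w t, 0 <= t -> (g x w @[x --> t^'+] --> g t w)) /\
      (forall w t, 0 < t -> cvg (g x w @[x --> t^'-])) /\
      (forall (n : nat) (t : nat -> R), 0 <= t 0%N ->
         (forall i, t i <= t i.+1) ->
         mutually_independent n (fun i w => g (t i.+1) w - g (t i) w)) /\
      (forall s t lam, 0 <= s -> s <= t -> 0 <= lam ->
         (\int[P]_w (expR (- lam * (g t w - g s w)))%:E =
          ((1 + lam) `^ (- (t - s)))%:E)%E).

Definition gamma_bridge (g : R -> Omega -> R) (tau : Omega -> R) : R -> Omega -> R :=
  fun t w => g (Order.min t (tau w)) w / g (tau w) w.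

Definition completed_nat_filtration (Y : R -> Omega -> R) (t : R) : set (set Omega) :=
  <<s [set A | (exists s B, [/\ 0 <= s, s <= t, measurable B & A = Y s @^-1` B])
               \/ null_sets A] >>.

Definition completed_nat_filtration_plus (Y : R -> Omega -> R) (t : R) : set (set Omega) :=
  [set A | forall s, t < s -> completed_nat_filtration Y s A].

Definition stopping_time (F : R -> set (set Omega)) (T : Omega -> R) : Prop :=
  forall t, 0 <= t -> F t [set w | T w <= t].

End defs.

(* On {tau > t} the bridge equals 1 at time t only if gamma is flat on [t, tau], and on
   {tau <= t} it differs from 1 only if gamma_tau = 0, i.e. gamma is flat on [0, tau].
   Either way gamma is flat on some [a, a + 1/(n+1)], a in {0, t}, an event of probability
   at most inf_lam (1 + lam)^(-1/(n+1)) = 0 by the Laplace transform of the increments.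
   So {tau <= t} differs by a null set from the event {zeta_t = 1} of F^zeta_t. *)
From HB Require Import structures.
From mathcomp Require Import all_boot all_order all_algebra.
From mathcomp Require Import all_classical all_reals all_analysis.
From mathcomp Require Import measurable_realfun.
Set Implicit Arguments. Unset Strict Implicit. Unset Printing Implicit Defensive.
Import Order.TTheory GRing.Theory Num.Theory.
Local Open Scope classical_set_scope.
Local Open Scope ring_scope.

Lemma le0_le_powR_1D (R : realType) (x : \bar R) (c : R) : 0 < c ->
  (forall lam, 0 <= lam -> (x <= ((1 + lam) `^ (- c))%:E)%E) -> (x <= 0)%E.
Proof.
move=> c0 xle; apply/lee_addgt0Pr => e e0; rewrite add0e.
have [e1|e1] := leP 1 e.
  by apply: le_trans (xle 0 (lexx _)) _; rewrite addr0 powR1 lee_fin.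
(* lam = e^(-1/c) - 1 is the point where (1 + lam)^(-c) = e *)
set K := ln e / (- c).
have K0 : 0 <= K by rewrite /K ler_ndivlMr ?oppr_lt0 // mul0r ltW // ln_lt0 ?e0.
have := xle (expR K - 1); rewrite subr_ge0 addrC subrK -expRM /K divfK ?oppr_eq0 ?gt_eqF //.
by rewrite lnK ?posrE //; apply; apply: le_trans (expR_ge1Dx K); rewrite lerDl.
Qed.

Lemma g_sigma_algebra_symdiff (T : pointedType) (G : set (set T)) (A B : set T) :
  G B -> (forall N, N `<=` A `+` B -> G N) -> <<s G >> A.
Proof.
move=> GB Gnull.
have -> : A = B `+` (B `+` A) by rewrite setYA setYK set0Y.
have mB : <<s G >> B by exact: sub_sigma_algebra.
have mN : <<s G >> (B `+` A) by apply: sub_sigma_algebra; apply: Gnull; rewrite setYC.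
move: (B `+` A) mN => N mN; rewrite setY_def.
exact: (@measurableU _ (g_sigma_algebraType G) _ _
  (@measurableD _ (g_sigma_algebraType G) _ _ mB mN)
  (@measurableD _ (g_sigma_algebraType G) _ _ mN mB)).
Qed.

Lemma nondecreasing_eq_flat_right (R : realType) (f : R -> R) (a b : R) :
  (forall s u, 0 <= s -> s <= u -> f s <= f u) -> 0 <= a -> a < b -> f a = f b ->
  exists n : nat, f (a + n.+1%:R^-1) = f a.
Proof.
move=> fmono a0 ab fab; have [n hn] := ltr_add_invr ab.
exists n; apply/le_anti/andP; split; last by apply: fmono; rewrite ?lerDl ?invr_ge0.
by rewrite fab; apply: fmono; [apply: addr_ge0; rewrite ?invr_ge0 | exact: ltW].
Qed.

Section gamma_process.
Context (d : measure_display) (Omega : measurableType d) (R : realType).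
Variables (P : probability Omega R) (g : R -> Omega -> R).
Hypothesis hg : standard_gamma_process P g.

Definition gamma_flat_after (a : R) : set Omega :=
  \bigcup_n [set w | g (a + n.+1%:R^-1) w = g a w].

Lemma measurable_gamma_eq (a b : R) : 0 <= a -> a <= b ->
  measurable [set w | g b w = g a w].
Proof.
move: hg => [mg _] a0 ab.
have := measurable_funB (mg b (le_trans a0 ab)) (mg a a0) measurableT (measurable_set1 0).
rewrite setTI; congr measurable; apply/seteqP; split => w /=.
  by move/eqP; rewrite subr_eq0 => /eqP.
by move=> ->; rewrite subrr.
Qed.

(* exp(-lam (g_b - g_a)) is 1 on the event and nonnegative elsewhere. *)
Lemma prob_gamma_eq_le (a b lam : R) : 0 <= a -> a <= b -> 0 <= lam ->
  (P [set w | g b w = g a w] <= ((1 + lam) `^ (- (b - a)))%:E)%E.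
Proof.
move: (hg) => [mg [_ [_ [_ [_ [_ laplace]]]]]] a0 ab lam0.
have mA := measurable_gamma_eq a0 ab.
have mga := mg a a0; have mgb := mg b (le_trans a0 ab).
rewrite -(laplace a b lam a0 ab lam0) -[X in P X]setIT -integral_indic //.
apply: (ge0_le_integral P measurableT).
- by move=> w _; rewrite lee_fin.
- by apply/measurable_EFinP; exact: measurable_indic.
- apply/measurable_EFinP; apply: measurableT_comp; first exact: measurable_expR.
  by apply: measurable_funM; [exact: measurable_cst | exact: measurable_funB].
- move=> w _; rewrite lee_fin /indic; case: (boolP (w \in _)) => [|_].
    by rewrite inE /= => ->; rewrite subrr mulr0 expR0.
  by rewrite expR_ge0.
Qed.

Lemma gamma_eq_negligible (a b : R) : 0 <= a -> a < b ->
  P.-negligible [set w | g b w = g a w].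
Proof.
move=> a0 ab; apply/negligibleP; first exact: measurable_gamma_eq (ltW ab).
apply/eqP; rewrite eq_le measure_ge0 andbT.
apply: (le0_le_powR_1D (c := b - a)); first by rewrite subr_gt0.
by move=> lam; exact: prob_gamma_eq_le (ltW ab).
Qed.

Lemma gamma_flat_after_negligible (a : R) : 0 <= a -> P.-negligible (gamma_flat_after a).
Proof.
move=> a0; apply: negligible_bigcup => n.
by apply: gamma_eq_negligible; rewrite // ltrDl invr_gt0.
Qed.

Lemma gamma_bridge_symdiff_sub (tau : Omega -> R) (t : R) :
  (forall w, 0 < tau w) -> 0 < t ->
  (gamma_bridge g tau t @^-1` [set 1]) `+` [set w | tau w <= t]
  `<=` gamma_flat_after 0 `|` gamma_flat_after t.
Proof.
move: hg => [_ [g00 [gmono _]]] tau0 t0 w.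
rewrite /gamma_bridge => -[[/= ratio1 /negP]|[/= taut ratio_ne1]].
- rewrite -ltNge => ttau; rewrite (min_l (ltW ttau)) in ratio1.
  have gtau0 : g (tau w) w != 0.
    by apply: contra_eq_neq ratio1 => ->; rewrite invr0 mulr0 eq_sym oner_neq0.
  have gt_eq : g t w = g (tau w) w by rewrite -(divfK gtau0 (g t w)) ratio1 mul1r.
  have [n flat] := nondecreasing_eq_flat_right (fun s u => gmono w s u) (ltW t0) ttau gt_eq.
  by right; exists n.
- rewrite (min_r taut) in ratio_ne1.
  have gtau0 : g (tau w) w = 0.
    by apply: contra_notP ratio_ne1 => /eqP; exact: divff.
  have g0_eq : g 0 w = g (tau w) w by rewrite g00 gtau0.
  have [n flat] := nondecreasing_eq_flat_right (fun s u => gmono w s u) (lexx 0) (tau0 w) g0_eq.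
  by left; exists n.
Qed.

End gamma_process.

Theorem mainTheorem4 (d : measure_display) (Omega : measurableType d)
  (R : realType) (P : probability Omega R)
  (g : R -> Omega -> R) (tau : Omega -> R) :
  complete_prob P ->
  standard_gamma_process P g ->
  measurable_fun setT tau ->
  (forall w, 0 < tau w) ->
  independent_rv_process P tau g ->
  (forall t, 0 < t ->
     P.-negligible ((gamma_bridge g tau t @^-1` [set 1]) `+` [set w | tau w <= t]))
  /\ stopping_time (completed_nat_filtration P (gamma_bridge g tau)) tau
  /\ stopping_time (completed_nat_filtration_plus P (gamma_bridge g tau)) tau.
Proof.
move=> _ hg _ tau0 _.
have symdiff_null t : 0 < t ->
    P.-negligible ((gamma_bridge g tau t @^-1` [set 1]) `+` [set w | tau w <= t]).
  move=> t0; apply: negligibleS (gamma_bridge_symdiff_sub hg tau0 t0) _.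
  by apply: negligibleU; [exact: (gamma_flat_after_negligible hg (lexx 0))
                          | exact: (gamma_flat_after_negligible hg (ltW t0))].
have adapted t u : 0 <= t -> t <= u ->
    completed_nat_filtration P (gamma_bridge g tau) u [set w | tau w <= t].
  rewrite le_eqVlt => /orP[/eqP <- _|t0 tu].
    have -> : [set w | tau w <= 0] = set0.
      by apply/seteqP; split => w //=; rewrite leNgt tau0.
    exact: sigma_algebra0.
  apply: (@g_sigma_algebra_symdiff _ _ _ (gamma_bridge g tau t @^-1` [set 1])).
    by left; exists t, [set 1]; split; [exact: ltW | | exact: measurable_set1 |].
  by move=> N sub; right; apply: negligibleS sub _; rewrite setYC; exact: symdiff_null.
split; first exact: symdiff_null.
split=> t t0; first exact: adapted.
by move=> s ts; exact: adapted (ltW ts).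
Qed.
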